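(* Let $W,E_0,E\in\mathcal G$ with $W$ adjacent to $E_0$, $E$ distant from $E_0$, and $W$ not distant from $E$. Then $W\cap E$ is a point (i.e. $\dim(W\cap E)=1$).
   Context: $K$ is a (not necessarily commutative) field and $V$ is a left vector space over $K$ of arbitrary (possibly infinite) dimension with $\dim V>2$. $\mathcal G:=\{X\le V\mid X\cong V/X\}$, assumed nonempty. Points are $1$-dimensional subspaces. $X,Y\in\mathcal G$ are adjacent if $\dim((X+Y)/X)=\dim((X+Y)/Y)=1$ (equivalently $\dim(X/(X\cap Y))=\dim(Y/(X\cap Y))=1$), and distant if $V=X\oplus Y$. *)

From HB Require Import structures.
From mathcomp Require Import all_boot all_order all_algebra.
Set Implicit Arguments. Unset Strict Implicit. Unset Printing Implicit Defensive.
Import GRing.Theory.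
Local Open Scope ring_scope.

Definition division_ring (K : unitRingType) : Prop :=
  forall x : K, x != 0 -> x \is a GRing.unit.

Section Sub.
Variables (K : unitRingType) (V : lmodType K).

Definition subspace (X : V -> Prop) : Prop :=
  X 0 /\ (forall u v, X u -> X v -> X (u + v)) /\ (forall (a : K) u, X u -> X (a *: u)).

Definition capS (X Y : V -> Prop) : V -> Prop := fun v => X v /\ Y v.

(* B <= A subspaces; dim (A / B) = 1 : A/B is spanned by one nonzero class *)
Definition quot_dim1 (A B : V -> Prop) : Prop :=
  exists a, A a /\ ~ B a /\ forall x, A x -> exists (k : K) b, B b /\ x = b + k *: a.

(* dim X = 1 : X is a point, i.e. spanned by a single nonzero vector *)
Definition is_point (X : V -> Prop) : Prop :=
  exists p, p != 0 /\ forall x, X x <-> exists k : K, x = k *: p.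

(* dim V > 2 : V contains three linearly independent vectors *)
Definition dim_gt2 : Prop :=
  exists u v w : V, forall a b c : K, a *: u + b *: v + c *: w = 0 -> [/\ a = 0, b = 0 & c = 0].

(* X ≅ V/X : by the first isomorphism theorem, V/X ≅ X iff there is a linear
   endomorphism of V with kernel X and image X. *)
Definition in_G (X : V -> Prop) : Prop :=
  subspace X /\
  exists f : {linear V -> V},
    (forall v, f v = 0 <-> X v) /\ (forall x, X x <-> exists v, f v = x).

Definition adjacent (X Y : V -> Prop) : Prop :=
  quot_dim1 X (capS X Y) /\ quot_dim1 Y (capS X Y).

Definition distant (X Y : V -> Prop) : Prop :=
  (forall v, X v -> Y v -> v = 0) /\ (forall v, exists x y, X x /\ Y y /\ v = x + y).

End Sub.

(* Write W = (W ∩ E0) + Kw and E0 = (W ∩ E0) + Ka, and split w = e + e0 along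
   V = E ⊕ E0.  If x = d + k w lies in W ∩ E, then x - k e = d + k e0 lies in
   E ∩ E0 = 0, so W ∩ E ⊆ Ke.  If e ∈ W this makes W ∩ E the point Ke.
   Otherwise W ∩ E = 0, and e0 = w - e ∈ W + E has a nonzero a-coordinate, so
   a ∈ W + E; hence E0 ⊆ W + E and W + E = V, i.e. W and E are distant,
   contradicting the hypothesis. *)

From HB Require Import structures.
From mathcomp Require Import all_boot all_order all_algebra.
From Stdlib Require Import Classical.
Set Implicit Arguments. Unset Strict Implicit. Unset Printing Implicit Defensive.
Import GRing.Theory.
Local Open Scope ring_scope.

Section Subspaces.
Variables (K : unitRingType) (V : lmodType K).
Implicit Types (X Y : V -> Prop) (u v : V).

Definition addS X Y : V -> Prop :=
  fun v => exists x y, X x /\ Y y /\ v = x + y.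

Lemma subspaceN X : subspace X -> forall u, X u -> X (- u).
Proof. by move=> [_ [_ XZ]] u Xu; rewrite -scaleN1r; apply: XZ. Qed.

Lemma subspaceB X : subspace X -> forall u v, X u -> X v -> X (u - v).
Proof.
by move=> sX u v Xu Xv; case: (sX) => _ [XD _]; exact: XD _ _ Xu (subspaceN sX Xv).
Qed.

Lemma subspaceI X Y : subspace X -> subspace Y -> subspace (capS X Y).
Proof.
move=> [X0 [XD XZ]] [Y0 [YD YZ]].
split; first by split.
by split=> [u v [Xu Yu] [Xv Yv] | k u [Xu Yu]]; split; auto.
Qed.

Lemma subspaceD X Y : subspace X -> subspace Y -> subspace (addS X Y).
Proof.
move=> [X0 [XD XZ]] [Y0 [YD YZ]]; split; first by exists 0, 0; rewrite addr0.
split=> [u v [x [y [Xx [Yy ->]]]] [x' [y' [Xx' [Yy' ->]]]] | k u [x [y [Xx [Yy ->]]]]].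
  by exists (x + x'), (y + y'); rewrite addrACA; auto.
by exists (k *: x), (k *: y); rewrite scalerDr; auto.
Qed.

Lemma addSl X Y : subspace Y -> forall x, X x -> addS X Y x.
Proof. by move=> [Y0 _] x Xx; exists x, 0; rewrite addr0. Qed.

Lemma addSr X Y : subspace X -> forall y, Y y -> addS X Y y.
Proof. by move=> [X0 _] y Yy; exists 0, y; rewrite add0r. Qed.

Lemma scalerK_unit (k : K) v : k \is a GRing.unit -> k^-1 *: (k *: v) = v.
Proof. by move=> k_unit; rewrite scalerA mulVr ?scale1r. Qed.

Lemma is_point_line X e :
  subspace X -> e != 0 -> X e -> (forall x, X x -> exists k, x = k *: e) ->
  is_point X.
Proof.
move=> [_ [_ XZ]] e_neq0 Xe Xline; exists e; split=> // x.
by split=> [/Xline | [k ->]]; last exact: XZ.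
Qed.

Lemma line_subspace_eq0 X e :
  division_ring K -> subspace X -> ~ X e ->
  (forall x, X x -> exists k, x = k *: e) -> forall x, X x -> x = 0.
Proof.
move=> hK [_ [_ XZ]] Xe Xline x Xx; have [k xE] := Xline x Xx.
have [k0|k_neq0] := eqVneq k 0; first by rewrite xE k0 scale0r.
by case: Xe; rewrite -(scalerK_unit e (hK _ k_neq0)) -xE; apply: XZ.
Qed.

Section AdjacentDistant.
Variables (W E0 E : V -> Prop) (w e e0 : V).
Hypotheses (sW : subspace W) (sE0 : subspace E0) (sE : subspace E).
Hypothesis Wdec : forall x, W x -> exists k d, capS W E0 d /\ x = d + k *: w.
Hypotheses (Ee : E e) (E0e0 : E0 e0) (wE : w = e + e0).

Lemma capS_sub_line :
  (forall v, E v -> E0 v -> v = 0) -> forall x, capS W E x -> exists k, x = k *: e.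
Proof.
move=> EE0_eq0 x [Wx Ex]; have [k [d [[Wd E0d] xE]]] := Wdec Wx.
exists k; apply/eqP; rewrite -subr_eq0; apply/eqP/EE0_eq0.
  by apply: subspaceB => //; case: sE => _ [_ EZ]; apply: EZ.
have -> : x - k *: e = d + k *: e0.
  by rewrite xE wE scalerDr addrCA addrAC subrr add0r.
by case: sE0 => _ [E0D E0Z]; apply/E0D/E0Z.
Qed.

Lemma addS_full (a : V) :
  division_ring K -> ~ W e -> W w ->
  (forall y, E0 y -> exists k d, capS W E0 d /\ y = d + k *: a) ->
  (forall v, addS E E0 v) -> forall v, addS W E v.
Proof.
move=> hK We Ww E0dec EE0_span v.
have sWE := subspaceD sW sE; have [_ [WED WEZ]] := sWE.
have [k' [d' [[Wd' _] e0E]]] := E0dec e0 E0e0.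
have k'_neq0 : k' != 0.
  apply/eqP=> k'0; apply: We; have -> : e = w - e0 by rewrite wE addrK.
  by apply: subspaceB; rewrite // e0E k'0 scale0r addr0.
have WEa : addS W E a.
  rewrite -(scalerK_unit a (hK _ k'_neq0)); apply: WEZ.
  have -> : k' *: a = (w - d') - e.
    by rewrite wE e0E addrCA [d' + _]addrC addrK addrAC subrr add0r.
  apply: (subspaceB sWE); last exact: addSr.
  by apply: (addSl sE); apply: subspaceB.
have [x [y [Ex [E0y ->]]]] := EE0_span v; have [k [d [[Wd _] ->]]] := E0dec y E0y.
by apply: (WED) (addSr sW Ex) (WED _ _ (addSl sE Wd) (WEZ k _ WEa)).
Qed.

End AdjacentDistant.
End Subspaces.

Theorem lemma4p8 (K : unitRingType) (V : lmodType K)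
  (hK : division_ring K) (hV : dim_gt2 V)
  (W E0 E : V -> Prop)
  (hW : in_G W) (hE0 : in_G E0) (hE : in_G E)
  (hadj : adjacent W E0) (hdist : distant E E0) (hnd : ~ distant W E) :
  is_point (capS W E).
Proof.
case: hW hE0 hE => [sW _] [sE0 _] [sE _].
case: hadj => [[w [Ww [w_notin Wdec]]] [a [_ [_ E0dec]]]].
case: hdist => [EE0_eq0 EE0_span].
have [e [e0 [Ee [E0e0 wE]]]] := EE0_span w.
have line := capS_sub_line sE0 sE Wdec Ee E0e0 wE EE0_eq0.
have sWE := subspaceI sW sE.
have [We | We] := classic (W e).
  apply: (is_point_line sWE _ (conj We Ee) line).
  by apply/eqP=> e0'; apply: w_notin; split; rewrite // wE e0' add0r.
case: hnd; split.
  by move=> v Wv Ev; apply: (line_subspace_eq0 hK sWE _ line (conj Wv Ev)); case.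
move=> v; exact: (addS_full sW sE Ee E0e0 wE hK We Ww E0dec EE0_span v).
Qed.
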